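(* Let $H$ be a graph and $H'$ any graph in the splitting family $\mathcal{H}(H)$. Then $\nu(H')\ge \nu(H)$.
   Context: $\nu(G)$ is the matching number of $G$. A vertex split on a vertex $v$ of $H$ replaces $v$ by an independent set of $d(v)$ new vertices, each adjacent to exactly one vertex of $N_H(v)$, distinct new vertices being adjacent to distinct neighbours. A vertex split on a set $U\subseteq V(H)$ means applying vertex splits to the vertices of $U$ one by one. The splitting family $\mathcal{H}(H)$ is the family of all graphs obtained from $H$ by applying a vertex split on some $U\subseteq V(H)$. *)

From mathcomp Require Import all_boot.
Set Implicit Arguments. Unset Strict Implicit. Unset Printing Implicit Defensive.

Record sgraph := SGraph {
  vert : finType;
  adj : rel vert;
  adj_sym : symmetric adj;
  adj_irr : irreflexive adj }.

(* Vertex split on v: v is replaced by one new vertex per neighbour w of v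
   (the vertex labelled w, inr w), adjacent exactly to w. *)
Section VSplit.
Variables (G : sgraph) (v : vert G).

Definition svert : finType := ({x : vert G | x != v} + {w : vert G | @adj G v w})%type.

Definition sadj (a b : svert) : bool :=
  match a, b with
  | inl x, inl y => @adj G (val x) (val y)
  | inl x, inr w => val x == val w
  | inr w, inl x => val w == val x
  | inr _, inr _ => false
  end.

Lemma sadj_sym : symmetric sadj.
Proof.
move=> [x|w] [y|z] //=; first exact: adj_sym.
all: by rewrite eq_sym.
Qed.

Lemma sadj_irr : irreflexive sadj.
Proof.
move=> [x|w] //=; first exact: adj_irr.
Qed.

Definition vsplit : sgraph := SGraph sadj_sym sadj_irr.

Definition vsplit_lift (x : vert G) : option (vert vsplit) :=
  match insub x with Some y => Some (inl y : svert) | None => None end.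
End VSplit.

(* Apply vertex splits one by one to the vertices in the list s (vertices of
   the original graph, tracked through the embedding f). *)
Fixpoint splitl (T : Type) (s : seq T) (G : sgraph) (f : T -> option (vert G))
  : sgraph :=
  match s with
  | [::] => G
  | t :: s' =>
      match f t with
      | None => splitl s' f
      | Some v => splitl s' (fun t' => obind (@vsplit_lift G v) (f t'))
      end
  end.

(* vertex split on a set U of vertices of H, in the order given by s *)
Definition vsplit_set (H : sgraph) (s : seq (vert H)) : sgraph :=
  splitl s (fun x : vert H => Some x).

Definition is_edge (G : sgraph) (e : {set vert G}) : bool :=
  [exists x, exists y, @adj G x y && (e == [set x; y])].

Definition matchingb (G : sgraph) (M : {set {set vert G}}) : bool :=
  [forall e in M, is_edge e] &&
  [forall e in M, forall f in M, (e != f) ==> [disjoint e & f]].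

Definition matching_number (G : sgraph) : nat :=
  \max_(M : {set {set vert G}} | matchingb M) #|M|.

(** Splitting a vertex [v] cannot destroy a matching: an edge [{x, y}] avoiding
    [v] survives unchanged, and an edge [{v, y}] is replaced by the edge joining
    [y] to the copy of [v] that was attached to [y].  Every image lies over the
    original edge when the copies of [v] are projected back to [v], so disjoint
    edges keep disjoint images and a matching maps injectively to a matching. *)

From Pilot Require Import Defs.
From mathcomp Require Import all_boot.
Set Implicit Arguments. Unset Strict Implicit. Unset Printing Implicit Defensive.

Section Matchings.
Variable G : sgraph.

Lemma adj_neq (x y : vert G) : adj x y -> y != x.
Proof. by apply: contraTneq => ->; rewrite adj_irr. Qed.

Lemma is_edge_adj (x y : vert G) : adj x y -> is_edge [set x; y].
Proof. by move=> axy; apply/existsP; exists x; apply/existsP; exists y; rewrite axy /=. Qed.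

Lemma is_edge_neq0 (e : {set vert G}) : is_edge e -> e != set0.
Proof.
case/existsP=> x /existsP [y /andP [_ /eqP ->]].
by apply/set0Pn; exists x; rewrite !inE eqxx.
Qed.

Lemma matchingb0 : matchingb (set0 : {set {set vert G}}).
Proof. by apply/andP; split; apply/forall_inP => e; rewrite inE. Qed.

Lemma exists_maximum_matching :
  exists2 M : {set {set vert G}}, matchingb M & matching_number G = #|M|.
Proof.
have nonempty : 0 < #|[pred M : {set {set vert G}} | matchingb M]|.
  by apply/card_gt0P; exists set0; rewrite inE matchingb0.
by case: (eq_bigmax_cond (fun M : {set {set vert G}} => #|M|) nonempty) => M; exists M.
Qed.

End Matchings.

Lemma leq_matching_number (G G' : sgraph) (phi : {set vert G} -> {set vert G'}) :
    (forall e, is_edge e -> is_edge (phi e)) ->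
    (forall e f : {set vert G}, [disjoint e & f] -> [disjoint phi e & phi f]) ->
  matching_number G <= matching_number G'.
Proof.
move=> phi_edge phi_disj; have [M /andP [/forall_inP Medge /forall_inP Mdisj] ->] :=
  exists_maximum_matching G.
have disjM (e f : {set vert G}) : e \in M -> f \in M -> e != f -> [disjoint e & f].
  by move=> eM fM; apply/implyP; apply: (forall_inP (Mdisj e eM)).
have phi_inj : {in M &, injective phi}.
  move=> e f eM fM phi_ef; apply/eqP; apply: contraTT (is_edge_neq0 (phi_edge f (Medge f fM))).
  by move=> /(disjM e f eM fM) /phi_disj; rewrite phi_ef -setI_eq0 setIid => ->.
rewrite -(card_in_imset phi_inj); apply: leq_bigmax_cond.
apply/andP; split; apply/forall_inP => _ /imsetP [e eM ->].
  exact/phi_edge/Medge.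
apply/forall_inP => _ /imsetP [f fM ->]; apply/implyP => phi_ef.
by apply/phi_disj/disjM => //; apply: contraNneq phi_ef => ->.
Qed.

Section VertexSplit.
Variables (G : sgraph) (v : vert G).

(* [inr w] is the copy of [v] attached to [w]; it belongs to the image of [e]
   when both [v] and [w] lie in [e]. *)
Definition split_image (e : {set vert G}) : {set vert (vsplit v)} :=
  [set a : svert v | match a with
                     | inl x => val x \in e
                     | inr w => (v \in e) && (val w \in e) end].

Definition split_proj (a : svert v) : vert G :=
  match a with inl x => val x | inr _ => v end.

Lemma split_image_sub_preim e : split_image e \subset split_proj @^-1: e.
Proof. by apply/subsetP => -[x|w]; rewrite !inE // => /andP []. Qed.

Lemma split_image_disjoint (e f : {set vert G}) :
  [disjoint e & f] -> [disjoint split_image e & split_image f].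
Proof.
move=> ef; apply: disjointWl (split_image_sub_preim e) _.
apply: disjointWr (split_image_sub_preim f) _.
by rewrite -setI_eq0 -preimsetI (disjoint_setI0 ef) preimset0.
Qed.

Lemma split_image_old_edge x y (xv : x != v) (yv : y != v) :
  split_image [set x; y] = [set inl (Sub x xv : {x | x != v}); inl (Sub y yv)].
Proof.
apply/setP => -[z|w]; rewrite !inE /=.
  by rewrite !(inj_eq inl_inj) -!val_eqE !SubK.
by rewrite ![v == _]eq_sym (negbTE xv) (negbTE yv).
Qed.

Lemma split_image_new_edge y (vy : adj v y) :
  split_image [set v; y] =
  [set inr (Sub y vy : {w | adj v w}); inl (Sub y (adj_neq vy))].
Proof.
apply/setP => -[z|w]; rewrite !inE /=.
  by rewrite (inj_eq inl_inj) -val_eqE SubK (negbTE (valP z)).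
by rewrite eqxx (inj_eq inr_inj) -val_eqE SubK (negbTE (adj_neq (valP w))) orbF.
Qed.

Lemma split_image_edge e : is_edge e -> is_edge (split_image e).
Proof.
case/existsP=> x /existsP [y /andP [axy /eqP ->]].
have [xv0 | xv] := eqVneq x v.
  subst x; rewrite (split_image_new_edge axy).
  by apply: is_edge_adj; apply: eqxx.
have [yv0 | yv] := eqVneq y v.
  subst y; rewrite adj_sym in axy; rewrite setUC (split_image_new_edge axy).
  by apply: is_edge_adj; apply: eqxx.
by rewrite (split_image_old_edge xv yv); apply: is_edge_adj.
Qed.

Lemma matching_number_vsplit : matching_number G <= matching_number (vsplit v).
Proof. exact: leq_matching_number split_image_edge split_image_disjoint. Qed.

End VertexSplit.

Lemma matching_number_splitl (T : Type) (s : seq T) (G : sgraph)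
    (f : T -> option (vert G)) :
  matching_number G <= matching_number (Defs.splitl s f).
Proof.
elim: s G f => //= t s IHs G f; case: (f t) => [v|]; last exact: IHs.
exact: leq_trans (matching_number_vsplit v) (IHs _ _).
Qed.

(* Monotonicity holds for every sequence of splits. *)
Theorem lemma2p3 (H : sgraph) (s : seq (vert H)) :
  uniq s -> matching_number H <= matching_number (vsplit_set s).
Proof. by move=> _; apply: matching_number_splitl. Qed.
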